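(* Let $G$ be finite and $z\in\mathbb C\setminus\{0\}$. The pairing $\langle\cdot,\cdot\rangle$ restricted to $\{f\in D_\infty:\mathcal Tf=zf\}\times\{\mu\in\mathrm{FA}(P):\mathcal T'\mu=z\mu\}$ is non-degenerate if and only if $\ker(S-z)=\ker(S-z)^k$ for all $k\ge1$, i.e. the eigenspace of $S$ for $z$ coincides with the generalized eigenspace of $S$ for $z$.
   Context: $G$ is a finite connected graph (no loops, no multiple edges, every vertex of degree $\ge2$); $E$ oriented edges, $\iota,\tau$, opposite $\bar e$; turn $e\rightsquigarrow e'$ iff $\tau(e)=\iota(e')$, $e'\ne\bar e$. $P$ = infinite paths $(e_1,e_2,\dots)$ with $e_i\rightsquigarrow e_{i+1}$; $(\mathcal Tf)(e_1,\dots)=\sum_{e_0\rightsquigarrow e_1}f(e_0,e_1,\dots)$. $S$ is the operator on $\mathrm{Map}(E)$ (all functions $E\to\mathbb C$), $(Sg)(e)=\sum_{e'\rightsquigarrow e}g(e')$. $D_m$ = functions on $P$ depending only on $e_1,\dots,e_m$, $D_\infty=\bigcup D_m$. Postal codes: finite paths $c=(c_1,\dots,c_m)$, $m\ge1$, with $c_i\rightsquigarrow c_{i+1}$; $\mathcal C_m$, $\mathcal C$; $\mathbf 1_c$ indicator of the paths beginning with $c$. $\mathrm{FA}(P)=\{\mu:\mathcal C\to\mathbb C:\mu(c)=\sum_{e:c_m\rightsquigarrow e}\mu(c,e)\ \forall c\}$. Pairing $\langle f,\mu\rangle=\sum_{c\in\mathcal C_m}f(c)\mu(c)$ for $f\in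 D_m$ ($f(c)$ the value of $f$ on paths beginning with $c$). $(\mathcal T'\mu)(c)=\langle\mathcal T\mathbf 1_c,\mu\rangle$. *)

From HB Require Import structures.
From mathcomp Require Import all_boot all_order all_algebra.
From mathcomp Require Import reals complex.
Set Implicit Arguments. Unset Strict Implicit. Unset Printing Implicit Defensive.
Import Order.TTheory GRing.Theory Num.Theory.
Local Open Scope ring_scope.
Local Open Scope complex_scope.

Section Defs.
Variables (R : realType) (V : finType) (adj : rel V).

Definition C := R[i].

Definition E := {x : V * V | adj x.1 x.2}.
Definition iota (e : E) : V := (val e).1.
Definition tau (e : E) : V := (val e).2.
(* the underlying pair of the opposite edge \bar e is (tau e, iota e) *)
Definition turn (e e' : E) : bool := (tau e == iota e') && (val e' != (tau e, iota e)).

(* infinite non-backtracking paths, indexed from 0 (p 0 = e_1) *)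
Definition is_path (p : nat -> E) : Prop := forall n, turn (p n) (p n.+1).

(* functions on P are functions (nat -> E) -> C, only their values on P matter *)
Definition inD (m : nat) (f : (nat -> E) -> C) : Prop :=
  forall p q, is_path p -> is_path q -> (forall i, (i < m)%N -> p i = q i) -> f p = f q.
Definition inDinf (f : (nat -> E) -> C) : Prop := exists m, inD m f.

Definition pcons (e0 : E) (p : nat -> E) : nat -> E :=
  fun i => if i is i'.+1 then p i' else e0.

Definition Top (f : (nat -> E) -> C) : (nat -> E) -> C :=
  fun p => \sum_(e0 : E | turn e0 (p 0%N)) f (pcons e0 p).

Definition postal (c : seq E) : bool :=
  if c is x :: c' then path turn x c' else false.

Definition ind (c : seq E) : (nat -> E) -> C :=
  fun p => if [forall i : 'I_(size c), p i == nth (p 0%N) c i] then 1 else 0.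

Definition nxt (e : E) : E := odflt e [pick e' | turn e e'].
Definition ext (x : E) (c : seq E) : nat -> E :=
  fun i => if (i < size c)%N then nth x c i
           else iter (i - size c).+1 nxt (last x c).
(* value f(c) of f on (a) path beginning with c *)
Definition evalc (f : (nat -> E) -> C) (c : seq E) : C :=
  if c is x :: _ then f (ext x c) else 0.

Definition isFA (mu : seq E -> C) : Prop :=
  forall c, postal c -> mu c = \sum_(e : E | turn (last (head e c) c) e) mu (rcons c e).

(* pairing <f, mu> computed at level m (for f in D_m) *)
Definition pairing_at (m : nat) (f : (nat -> E) -> C) (mu : seq E -> C) : C :=
  \sum_(t : m.-tuple E | postal t) evalc f t * mu t.

(* dual transfer operator: (T' mu)(c) = <T 1_c, mu>, with T 1_c in D_|c| *)
Definition Tdual (mu : seq E -> C) : seq E -> C :=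
  fun c => pairing_at (size c) (Top (ind c)) mu.

Definition eigf (z : C) (f : (nat -> E) -> C) : Prop :=
  inDinf f /\ forall p, is_path p -> Top f p = z * f p.
Definition eigmu (z : C) (mu : seq E -> C) : Prop :=
  isFA mu /\ forall c, postal c -> Tdual mu c = z * mu c.

Definition pairing_nondegenerate (z : C) : Prop :=
  (forall f, eigf z f -> (exists p, is_path p /\ f p != 0) ->
     exists mu, eigmu z mu /\ exists m, inD m f /\ pairing_at m f mu != 0) /\
  (forall mu, eigmu z mu -> (exists c, postal c /\ mu c != 0) ->
     exists f, eigf z f /\ exists m, inD m f /\ pairing_at m f mu != 0).

Definition Sop (g : E -> C) : E -> C := fun e => \sum_(e' : E | turn e' e) g e'.
Definition Sminus (z : C) (g : E -> C) : E -> C := fun e => Sop g e - z * g e.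
Definition in_ker_pow (z : C) (k : nat) (g : E -> C) : Prop :=
  forall e, iter k (Sminus z) g e = 0.

End Defs.

Arguments in_ker_pow {R V} adj z k g.
Arguments pairing_nondegenerate {R V} adj z.

From Pilot Require Import Defs.
From HB Require Import structures.
From mathcomp Require Import all_boot all_order all_algebra.
From mathcomp Require Import reals complex ring.
Import Order.TTheory GRing.Theory Num.Theory.
Local Open Scope ring_scope.
Set Implicit Arguments. Unset Strict Implicit. Unset Printing Implicit Defensive.

(* For z != 0 the relation T f = z f forces f into D_1, so eigenfunctions of T are the
   functions p |-> g(p_1) with g in the left kernel of S - z.  Dually, T' mu = z mu forces
   mu(c_1 ... c_m) = mu(c_m) / z^(m-1), so eigenmeasures are determined by a right kernel
   vector nu(e) = mu(e) of S - z, and the pairing of f with mu becomes the bilinear pairing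
   sum_e g(e) nu(e) between the left and right kernels of the matrix S - z.  That pairing is
   nondegenerate iff the kernel and the image of S - z meet trivially, i.e. iff
   ker (S - z)^2 = ker (S - z). *)

Lemma big_tuple_rcons (T : finType) (K : nmodType) n (F : n.+1.-tuple T -> K) :
  \sum_(t : n.+1.-tuple T) F t = \sum_(t : n.-tuple T) \sum_(x : T) F [tuple of rcons t x].
Proof.
rewrite pair_big /= (reindex (fun p : n.-tuple T * T => [tuple of rcons p.1 p.2])) //=.
exists (fun t : n.+1.-tuple T =>
  ([tuple of belast (thead t) (behead t)], last (thead t) (behead t))).
  move=> [t x] _; rewrite /thead (tnth_nth x) /=.
  case: t => [[|y s] hs]; congr (_, _); try apply: val_inj;
    by rewrite /= ?belast_rcons ?last_rcons.
by move=> t _; case/tupleP: t => x t; apply: val_inj; rewrite /= theadE -lastI.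
Qed.

Lemma big_tuple0 (T : finType) (K : nmodType) (F : 0.-tuple T -> K) :
  \sum_(t : 0.-tuple T) F t = F [tuple].
Proof. by rewrite (big_pred1 [tuple]) // => t /=; rewrite [t]tuple0; apply/esym/eqP. Qed.

Section SquareKernel.
Variables (F : fieldType) (n : nat).

Definition rker_stable (A : 'M[F]_n) : Prop :=
  forall u : 'rV[F]_n, u *m A *m A = 0 -> u *m A = 0.

Lemma rker_stable_rank (A : 'M[F]_n) :
  rker_stable A <-> \rank (kermx (A *m A)) = \rank (kermx A).
Proof.
have ker_sub : (kermx A <= kermx (A *m A))%MS.
  by apply/sub_kermxP; rewrite mulmxA mulmx_ker mul0mx.
have [_ eq_rankE] := mxrank_leqif_sup ker_sub.
split=> [hyp | /eqP].
  apply/eqP; rewrite eq_sym eq_rankE; apply/row_subP => i; apply/sub_kermxP/hyp.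
  by rewrite -mulmxA; apply/sub_kermxP/row_sub.
rewrite eq_sym eq_rankE => sub_ker u; rewrite -mulmxA => /sub_kermxP u_ker.
exact/sub_kermxP/(submx_trans u_ker).
Qed.

Lemma rker_stable_trmx (A : 'M[F]_n) : rker_stable A -> rker_stable A^T.
Proof.
move=> /rker_stable_rank eq_rank; apply/rker_stable_rank.
by rewrite -trmx_mul !mxrank_ker !mxrank_tr -!mxrank_ker.
Qed.

(* A row vector pairs trivially with the whole right kernel iff it lies in the row space
   of [A]; in the row space, only [0] is killed by [A] when [A] is stable. *)
Lemma rker_stable_pairing (A : 'M[F]_n) :
  rker_stable A ->
  forall u : 'rV[F]_n, u *m A = 0 -> u != 0 ->
  exists w : 'cV[F]_n, A *m w = 0 /\ (u *m w) 0 0 != 0.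
Proof.
move=> rker_sq u uA u_neq0.
have : ~~ (u <= A)%MS.
  by apply: contra u_neq0 => /submxP[v uE]; rewrite uE rker_sq -?uE.
rewrite submxE => /matrix0Pn[i [j uij]].
exists (cokermx A *m delta_mx j 0); split.
  by rewrite mulmxA mulmx_coker mul0mx.
by rewrite mulmxA -colE mxE -(ord1 i).
Qed.

Lemma rker_stable_cpairing (A : 'M[F]_n) :
  rker_stable A ->
  forall w : 'cV[F]_n, A *m w = 0 -> w != 0 ->
  exists u : 'rV[F]_n, u *m A = 0 /\ (u *m w) 0 0 != 0.
Proof.
move=> /rker_stable_trmx rker_sq w Aw w_neq0.
have wA : w^T *m A^T = 0 by rewrite -trmx_mul Aw trmx0.
have [|v [vA vw]] := rker_stable_pairing rker_sq wA; first by rewrite trmx_eq0.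
exists v^T; split; first by rewrite -[A]trmxK -trmx_mul vA trmx0.
by rewrite -[w]trmxK -trmx_mul mxE.
Qed.

Lemma rker_stable_of_pairing (A : 'M[F]_n) :
  (forall u : 'rV[F]_n, u *m A = 0 -> u != 0 ->
     exists w : 'cV[F]_n, A *m w = 0 /\ (u *m w) 0 0 != 0) ->
  rker_stable A.
Proof.
move=> pairing u uAA; apply/eqP; apply: contraT => uA_neq0.
have [w [Aw]] := pairing _ uAA uA_neq0.
by rewrite -mulmxA Aw mulmx0 mxE eqxx.
Qed.

Lemma rker_stable_exp (A : 'M[F]_n) :
  rker_stable A ->
  forall k (u : 'rV[F]_n), (0 < k)%N -> u *m A ^+ k = 0 <-> u *m A = 0.
Proof.
move=> rker_sq; elim=> // -[_ u _|k IH u _]; first by rewrite expr1.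
rewrite exprS -mulmxE mulmxA; split=> [/IH uAA | ->]; last by rewrite mul0mx.
exact/rker_sq/uAA.
Qed.
End SquareKernel.

Section NonBacktracking.
Variables (R : realType) (V : finType) (adj : rel V).
Hypothesis adj_deg : forall v : V, (1 < #|[set w | adj v w]|)%N.
Local Notation E := (E adj).
Local Notation tr := (@turn V adj).
Local Notation ind := (@Defs.ind R V adj).

Lemma turn_nxt (e : E) : tr e (nxt e).
Proof.
rewrite /nxt; case: pickP => [//|no_turn]; exfalso.
have [w [adj_w w_neq]] : exists w, adj (Defs.tau e) w /\ w != Defs.iota e.
  have /card_gt1P[w1 [w2 [w1_adj w2_adj w12]]] := adj_deg (Defs.tau e).
  rewrite !inE in w1_adj w2_adj.
  have [w1E|] := eqVneq w1 (Defs.iota e); last by exists w1.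
  by exists w2; rewrite -w1E eq_sym.
have := no_turn (exist _ (Defs.tau e, w) adj_w).
by rewrite /turn /Defs.iota /Defs.tau /= eqxx xpair_eqE eqxx w_neq.
Qed.

Lemma ext_nth (x : E) c i : (i < size c)%N -> ext x c i = nth x c i.
Proof. by rewrite /ext => ->. Qed.

Lemma ext_path (x : E) s : path tr x s -> is_path (ext x (x :: s)).
Proof.
move=> xs_path i; have [lt_is|le_si] := ltnP i (size s).
  rewrite !ext_nth /= ?ltnS ?(ltnW lt_is) //.
  exact: (pathP x xs_path).
suff -> : ext x (x :: s) i.+1 = nxt (ext x (x :: s) i) by apply: turn_nxt.
rewrite /ext /= !ltnS ltnNge le_si /=; case: ltngtP le_si => // [lt_si _|si_eq _].
  by rewrite -subSS subSn.
by rewrite -si_eq subnn (last_nth x).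
Qed.

Lemma pcons_path (e0 : E) p : is_path p -> tr e0 (p 0%N) -> is_path (pcons e0 p).
Proof. by move=> p_path e0p [|i] //; apply: p_path. Qed.

Lemma postal_rcons (t : seq E) e : t != [::] ->
  postal (rcons t e) = postal t && tr (last (head e t) t) e.
Proof. by case: t => //= x t _; rewrite rcons_path. Qed.

Lemma inD_mono m k (f : (nat -> E) -> C R) : (m <= k)%N -> inD m f -> inD k f.
Proof.
move=> le_mk fD p q p_path q_path pq; apply: fD => // i lt_im.
exact/pq/(leq_trans lt_im).
Qed.

Lemma evalc_rcons m (f : (nat -> E) -> C R) (t : seq E) e : (0 < m)%N ->
  inD m f -> size t = m -> postal (rcons t e) -> evalc f (rcons t e) = evalc f t.
Proof.
case: t => [|x s] + fD sz; subst m => //= _.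
move=> xse_path; have := xse_path; rewrite rcons_path => /andP[xs_path _].
apply: fD; [exact: ext_path | exact: ext_path | move=> i lt_is].
by rewrite -rcons_cons !ext_nth ?nth_rcons ?lt_is // size_rcons ltnS ltnW.
Qed.

Lemma pairing_ext m (f f' : (nat -> E) -> C R) mu :
  (forall p, is_path p -> f p = f' p) -> pairing_at m f mu = pairing_at m f' mu.
Proof.
move=> ff'; apply: eq_bigr => t; case: (tval t) => //= x s xs_path.
by rewrite ff' //; apply: ext_path.
Qed.

Lemma pairing_at0 (f : (nat -> E) -> C R) mu : pairing_at 0 f mu = 0.
Proof. by rewrite /pairing_at big_mkcond big_tuple0. Qed.

Lemma pairing_at1 (f : (nat -> E) -> C R) mu :
  pairing_at 1 f mu = \sum_(e : E) evalc f [:: e] * mu [:: e].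
Proof. by rewrite /pairing_at big_mkcond big_tuple_rcons big_tuple0. Qed.

(* Finite additivity makes the pairing independent of the level [m] at which it is
   computed, except for the degenerate level 0 (an empty sum). *)
Lemma pairing_at_succ m (f : (nat -> E) -> C R) mu : isFA mu -> (0 < m)%N ->
  inD m f -> pairing_at m.+1 f mu = pairing_at m f mu.
Proof.
move=> FA m_gt0 fD; rewrite /pairing_at big_mkcond [RHS]big_mkcond.
rewrite big_tuple_rcons /=; apply: eq_bigr => t _.
have t_neq0 : tval t != [::] by rewrite -size_eq0 size_tuple -lt0n.
under eq_bigr => e _ do rewrite postal_rcons //.
case: ifP => [t_postal|_] /=; last by rewrite big1.
rewrite (FA _ t_postal) mulr_sumr [RHS]big_mkcond; apply: eq_bigr => e _.
case: ifP => // turn_e; rewrite (evalc_rcons m_gt0 fD) ?size_tuple //.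
by rewrite postal_rcons // t_postal.
Qed.

Lemma pairing_at_mono m k (f : (nat -> E) -> C R) mu : isFA mu -> (0 < m)%N ->
  inD m f -> (m <= k)%N -> pairing_at k f mu = pairing_at m f mu.
Proof.
move=> FA m_gt0 fD; elim: k => [|k IH].
  by rewrite leqn0 => /eqP m0; rewrite m0 in m_gt0.
rewrite leq_eqVlt ltnS => /orP[/eqP <- //|le_mk].
have k_gt0 := leq_trans m_gt0 le_mk.
by rewrite pairing_at_succ ?IH //; apply: inD_mono le_mk fD.
Qed.

Lemma pairing_at_first m (g : E -> C R) mu : isFA mu ->
  pairing_at m.+1 (fun p => g (p 0%N)) mu = \sum_(e : E) g e * mu [:: e].
Proof.
move=> FA; rewrite (pairing_at_mono FA (m := 1)) // ?pairing_at1; last first.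
  by move=> p q _ _ pq; rewrite pq.
by apply: eq_bigr => e _; rewrite /evalc ext_nth.
Qed.

Lemma ind_nil p : ind [::] p = 1.
Proof. by rewrite /ind; case: forallP => // -[] []. Qed.

Lemma ind_head y s p : ind (y :: s) p != 0 -> p 0%N = y.
Proof. by rewrite /ind; case: forallP => [/(_ ord0)/eqP|] //; rewrite eqxx. Qed.

Lemma ind_pcons x c (e0 : E) p :
  ind (x :: c) (pcons e0 p) = (e0 == x)%:R * ind c p.
Proof.
rewrite /ind; have [->|ne0x] /= := eqVneq e0 x; last first.
  by rewrite mul0r; case: forallP => // /(_ ord0) /=; rewrite (negbTE ne0x).
rewrite mul1r; congr (if _ then _ else _); apply/forallP/forallP => /= pc i.
  by have := pc (lift ord0 i); rewrite lift0 /= (set_nth_default (p 0%N)) ?ltn_ord.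
case: i => -[|i] //= lt_ic; have := pc (Ordinal (lt_ic : (i < size c)%N)).
by rewrite /= (set_nth_default (p 0%N)).
Qed.

Lemma inD_ind c : inD (size c) (ind c).
Proof.
move=> p q _ _ pq; rewrite /ind; congr (if _ then _ else _).
by apply: eq_forallb => i; rewrite pq // (set_nth_default (q 0%N)) //.
Qed.

Lemma evalc_ind c (t : seq E) : postal t -> size t = size c ->
  evalc (ind c) t = (t == c)%:R.
Proof.
case: t => // x s _ sz; rewrite /evalc /ind.
have -> : [forall i : 'I_(size c), ext x (x :: s) i == nth (ext x (x :: s) 0%N) c i]
          = (x :: s == c).
  apply/forallP/eqP => [xsc | <- i]; last by rewrite !ext_nth -?sz // eqxx.
  apply: (eq_from_nth (x0 := x)) => // i; rewrite sz => lt_ic.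
  have := xsc (Ordinal lt_ic); rewrite /= !ext_nth ?sz //; last by rewrite -sz.
  by rewrite (set_nth_default x) // => /eqP.
by case: (_ == _).
Qed.

Lemma pairing_ind c mu : postal c -> pairing_at (size c) (ind c) mu = mu c.
Proof.
move=> c_postal; rewrite /pairing_at (bigD1 (in_tuple c)) //= evalc_ind //.
rewrite eqxx mul1r big1 ?addr0 // => t /andP[t_postal t_neq].
by rewrite evalc_ind ?size_tuple // -(inj_eq val_inj) in t_neq *; rewrite (negbTE t_neq) mul0r.
Qed.

Lemma Top_ind_cons x c p : Top (ind (x :: c)) p = (tr x (p 0%N))%:R * ind c p.
Proof.
rewrite /Top; under eq_bigr => e0 _ do rewrite ind_pcons.
rewrite -mulr_suml big_mkcond (bigD1 x) //= eqxx big1 ?addr0 => [|e ne_ex].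
  by case: (tr x _); rewrite ?mul1r.
by rewrite (negbTE ne_ex) if_same.
Qed.

Lemma Tdual_single (mu : seq E -> C R) x : isFA mu -> Tdual mu [:: x] = \sum_(e | tr x e) mu [:: e].
Proof.
move=> FA; rewrite /Tdual (@pairing_ext _ _ (fun p => (tr x (p 0%N))%:R) _); last first.
  by move=> p _; rewrite Top_ind_cons ind_nil mulr1.
rewrite (pairing_at_first 0 (fun e => (tr x e)%:R)) // [RHS]big_mkcond; apply: eq_bigr => e _.
by case: (tr x e); rewrite ?mul1r ?mul0r.
Qed.

Lemma Tdual_cons (mu : seq E -> C R) x y s : isFA mu -> tr x y -> postal (y :: s) ->
  Tdual mu [:: x, y & s] = mu (y :: s).
Proof.
move=> FA xy ys_postal; rewrite /Tdual (@pairing_ext _ _ (ind (y :: s)) _).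
  by rewrite (pairing_at_succ FA _ (@inD_ind (y :: s))) // pairing_ind.
move=> p _; rewrite Top_ind_cons.
have [->|/ind_head ->] := eqVneq (ind (y :: s) p) 0; first by rewrite mulr0.
by rewrite xy mul1r.
Qed.

Local Notation N := #|{: E}|.

Definition turn_mx : 'M[C R]_N := \matrix_(i, j) (tr (enum_val i) (enum_val j))%:R.
Definition rowfun (g : E -> C R) : 'rV[C R]_N := \row_j g (enum_val j).
Definition colfun (nu : E -> C R) : 'cV[C R]_N := \col_i nu (enum_val i).

Lemma sum_enum_val (F : E -> C R) : \sum_(e : E) F e = \sum_(i < N) F (enum_val i).
Proof. by rewrite (big_enum_val (A := {: E})). Qed.

Lemma rowfunK (u : 'rV[C R]_N) : rowfun (fun e => u 0 (enum_rank e)) = u.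
Proof. by apply/rowP => j; rewrite !mxE enum_valK. Qed.

Lemma colfunK (w : 'cV[C R]_N) : colfun (fun e => w (enum_rank e) 0) = w.
Proof. by apply/colP => i; rewrite !mxE enum_valK. Qed.

Lemma rowfun_eq0 (g : E -> C R) : rowfun g = 0 <-> forall e, g e = 0.
Proof.
split=> [/rowP g0 e | g0]; last by apply/rowP => j; rewrite !mxE g0.
by have := g0 (enum_rank e); rewrite !mxE enum_rankK.
Qed.

Lemma colfun_eq0 (nu : E -> C R) : colfun nu = 0 <-> forall e, nu e = 0.
Proof.
split=> [/colP nu0 e | nu0]; last by apply/colP => i; rewrite !mxE nu0.
by have := nu0 (enum_rank e); rewrite !mxE enum_rankK.
Qed.

Lemma rowfun_mul_colfun (g nu : E -> C R) :
  (rowfun g *m colfun nu) 0 0 = \sum_(e : E) g e * nu e.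
Proof. by rewrite mxE sum_enum_val; apply: eq_bigr => i _; rewrite !mxE. Qed.

Section Eigenvectors.
Variable z : C R.
Hypothesis z_neq0 : z != 0.

(* [Top] maps [D_(m+2)] into [D_(m+1)], and [z] is invertible. *)
Lemma eigf_inD1 (f : (nat -> E) -> C R) : eigf z f -> inD 1 f.
Proof.
case=> -[m fD] f_eig; elim: m fD => [|m IH] fD; first exact: inD_mono fD.
case: m IH fD => // m IH fD; apply: IH => p q p_path q_path pq.
have Tpq : Top f p = Top f q.
  rewrite /Top (pq 0%N) //; apply: eq_bigr => e0 e0q.
  apply: fD => [||[|i] //= lt_im]; last exact: pq.
    by apply: pcons_path; rewrite ?(pq 0%N).
  exact: pcons_path.
by apply: (mulfI z_neq0); rewrite -!f_eig.
Qed.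

Lemma eigf_first (f : (nat -> E) -> C R) : eigf z f ->
  forall p, is_path p -> f p = f (ext (p 0%N) [:: p 0%N]).
Proof. by move=> f_eig p p_path; apply: (eigf_inD1 f_eig) => //; [apply: ext_path | case]. Qed.

Lemma eigf_ker (f : (nat -> E) -> C R) : eigf z f ->
  in_ker_pow adj z 1 (fun e => f (ext e [:: e])).
Proof.
move=> f_eig e; have e_path : is_path (ext e [:: e]) by apply: ext_path.
rewrite /= /Sminus -(proj2 f_eig _ e_path) /Top ext_nth //=.
apply/eqP; rewrite subr_eq0; apply/eqP.
apply/eq_bigr => e0 e0e; rewrite [RHS](eigf_first f_eig) //.
by apply: pcons_path; rewrite ?ext_nth.
Qed.

Lemma eigf_of_ker (g : E -> C R) : in_ker_pow adj z 1 g -> eigf z (fun p => g (p 0%N)).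
Proof.
move=> g_ker; split; first by exists 1%N => p q _ _ pq; rewrite pq.
by move=> p _; apply/eqP; rewrite -subr_eq0; apply/eqP/g_ker.
Qed.

Definition Sop_tr (nu : E -> C R) (e : E) : C R := \sum_(e' | tr e e') nu e'.

Lemma eigmu_single (mu : seq E -> C R) : eigmu z mu ->
  forall e, Sop_tr (fun e => mu [:: e]) e = z * mu [:: e].
Proof. by case=> FA mu_eig e; rewrite /Sop_tr -Tdual_single // mu_eig. Qed.

Lemma eigmu_last (mu : seq E -> C R) : eigmu z mu ->
  forall x c, postal (x :: c) -> mu (x :: c) = mu [:: last x c] / z ^+ size c.
Proof.
move=> [FA mu_eig] x c; elim: c x => [|y s IH] x xs_postal; first by rewrite divr1.
have /andP[xy ys_postal] : tr x y && postal (y :: s) by [].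
have := mu_eig _ xs_postal; rewrite Tdual_cons // IH // => mu_xys.
apply: (mulfI z_neq0); rewrite -mu_xys /= exprS; field.
by rewrite z_neq0 expf_neq0.
Qed.

Definition measure_of (nu : E -> C R) (c : seq E) : C R :=
  if c is x :: c' then nu (last x c') / z ^+ size c' else 0.

Lemma eigmu_measure_of (nu : E -> C R) : (forall e, Sop_tr nu e = z * nu e) ->
  eigmu z (measure_of nu).
Proof.
move=> nu_eig; have FA : isFA (measure_of nu).
  case=> // x c _ /=; under eq_bigr => e _ do rewrite last_rcons size_rcons.
  by rewrite -mulr_suml -/(Sop_tr nu (last x c)) nu_eig exprS; field; rewrite z_neq0 expf_neq0.
split=> // -[//|x [|y s] xs_postal].
  by rewrite Tdual_single //= expr0 divr1 -nu_eig; under eq_bigr => e _ do rewrite divr1.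
have /andP[xy ys_postal] : tr x y && postal (y :: s) by [].
by rewrite Tdual_cons //= exprS; field; rewrite z_neq0 expf_neq0.
Qed.

Local Notation Sz := (turn_mx - z%:M).

Lemma rowfun_Sminus (g : E -> C R) : rowfun g *m Sz = rowfun (Sminus z g).
Proof.
apply/rowP => j; rewrite mulmxBr mul_mx_scalar !mxE /Sminus /Sop; congr (_ - _).
rewrite [RHS]big_mkcond sum_enum_val; apply: eq_bigr => i _; rewrite !mxE.
by case: (tr _ _); rewrite ?mulr1 ?mulr0.
Qed.

Lemma Sz_colfun (nu : E -> C R) : Sz *m colfun nu = colfun (fun e => Sop_tr nu e - z * nu e).
Proof.
apply/colP => i; rewrite mulmxBl mul_scalar_mx !mxE /Sop_tr; congr (_ - _).
rewrite [RHS]big_mkcond sum_enum_val; apply: eq_bigr => j _; rewrite !mxE.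
by case: (tr _ _); rewrite ?mul1r ?mul0r.
Qed.

Lemma in_ker_powE k (g : E -> C R) : in_ker_pow adj z k g <-> rowfun g *m Sz ^+ k = 0.
Proof.
rewrite /in_ker_pow -rowfun_eq0; suff -> : rowfun (iter k (Sminus z) g) = rowfun g *m Sz ^+ k by [].
elim: k => [|k IH]; first by rewrite expr0 mulmx1.
by rewrite iterS -rowfun_Sminus IH exprSr -mulmxA.
Qed.

Lemma ker_pow_stableP :
  (forall k, (1 <= k)%N -> forall g, in_ker_pow adj z 1 g <-> in_ker_pow adj z k g) <->
  rker_stable Sz.
Proof.
split=> [stable u | rker_sq k k_gt0 g].
  have := stable 2%N isT (fun e => u 0 (enum_rank e)).
  by rewrite !in_ker_powE rowfunK expr1 expr2 -mulmxE mulmxA => -[_].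
by rewrite !in_ker_powE expr1; apply: iff_sym; apply: rker_stable_exp.
Qed.

Lemma rker_stable_of_nondegenerate : pairing_nondegenerate adj z -> rker_stable Sz.
Proof.
case=> left_nd _; apply: rker_stable_of_pairing => u uS u_neq0.
pose g e := u 0 (enum_rank e).
have g_ker : in_ker_pow adj z 1 g by rewrite in_ker_powE expr1 rowfunK.
have [e ge] : exists e, g e != 0.
  case: (pickP (fun e => g e != 0)) => [e ge|g0]; first by exists e.
  by case/negP: u_neq0; rewrite -(rowfunK u); apply/eqP/rowfun_eq0 => e; apply/eqP/negbFE/g0.
have [|mu [mu_eig [m [_ pair_nz]]]] := left_nd _ (eigf_of_ker g_ker).
  by exists (ext e [:: e]); split; [apply: ext_path | rewrite ext_nth].
exists (colfun (fun e => mu [:: e])); split.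
  by rewrite Sz_colfun; apply/colfun_eq0 => e'; rewrite eigmu_single // subrr.
case: m pair_nz => [|m]; first by rewrite pairing_at0 eqxx.
rewrite pairing_at_first; last exact: (proj1 mu_eig).
by rewrite -[u]rowfunK rowfun_mul_colfun.
Qed.

Section KernelSquare.
Hypothesis rker_sq : rker_stable Sz.

Lemma eigf_pairing (f : (nat -> E) -> C R) : eigf z f ->
  (exists p, is_path p /\ f p != 0) ->
  exists mu, eigmu z mu /\ exists m, inD m f /\ pairing_at m f mu != 0.
Proof.
move=> f_eig [p [p_path fp]]; pose g e := f (ext e [:: e]).
have gS : rowfun g *m Sz = 0 by rewrite -[Sz]expr1 -in_ker_powE; apply: eigf_ker.
have g_neq0 : rowfun g != 0.
  apply: contra fp => /eqP/rowfun_eq0/(_ (p 0%N)) g0.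
  by rewrite (eigf_first f_eig) //; apply/eqP; exact: g0.
have [w [Sw gw]] := rker_stable_pairing rker_sq gS g_neq0.
pose nu e := w (enum_rank e) 0.
have nu_eig e : Sop_tr nu e = z * nu e.
  apply/eqP; rewrite -subr_eq0; apply/eqP; move: e.
  by apply/colfun_eq0; rewrite -Sz_colfun colfunK.
exists (measure_of nu); split; first exact: eigmu_measure_of.
exists 1%N; split; first exact: eigf_inD1.
rewrite (@pairing_ext _ _ (fun p => g (p 0%N)) _) => [|q q_path]; last exact: eigf_first.
rewrite pairing_at_first; last by case: (eigmu_measure_of nu_eig).
under eq_bigr => e _ do rewrite /= divr1.
by rewrite -rowfun_mul_colfun colfunK.
Qed.

Lemma eigmu_pairing (mu : seq E -> C R) : eigmu z mu ->
  (exists c, postal c /\ mu c != 0) ->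
  exists f, eigf z f /\ exists m, inD m f /\ pairing_at m f mu != 0.
Proof.
move=> mu_eig [c [c_postal mu_c]]; case: c c_postal mu_c => // x c xc_postal mu_xc.
pose nu e := mu [:: e].
have Snu : Sz *m colfun nu = 0.
  by rewrite Sz_colfun; apply/colfun_eq0 => e; rewrite eigmu_single // subrr.
have nu_neq0 : colfun nu != 0.
  apply: contra mu_xc => /eqP/colfun_eq0/(_ (last x c)) nu0.
  by rewrite (eigmu_last mu_eig) // [mu _]nu0 mul0r.
have [u [uS uw]] := rker_stable_cpairing rker_sq Snu nu_neq0.
pose g e := u 0 (enum_rank e).
exists (fun p => g (p 0%N)); split.
  by apply: eigf_of_ker; rewrite in_ker_powE expr1 rowfunK.
exists 1%N; split; first by move=> p q _ _ pq; rewrite pq.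
rewrite pairing_at_first; last exact: (proj1 mu_eig).
by move: uw; rewrite -[u]rowfunK rowfun_mul_colfun.
Qed.
End KernelSquare.

Lemma pairing_nondegenerateP : pairing_nondegenerate adj z <->
  rker_stable Sz.
Proof.
split=> [|rker_sq]; first exact: rker_stable_of_nondegenerate.
by split=> [f|mu]; [apply: eigf_pairing | apply: eigmu_pairing].
Qed.
End Eigenvectors.
End NonBacktracking.

Theorem mainTheorem17 (R : realType) (V : finType) (adj : rel V)
  (adj_sym : symmetric adj) (adj_irr : irreflexive adj)
  (adj_conn : forall u v : V, connect adj u v)
  (adj_deg : forall v : V, (1 < #|[set w | adj v w]|)%N)
  (z : C R) (z_neq0 : z != 0) :
  pairing_nondegenerate adj z <->
  (forall k : nat, (1 <= k)%N -> forall g : E adj -> C R,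
     in_ker_pow adj z 1 g <-> in_ker_pow adj z k g).
Proof.
exact: iff_trans (pairing_nondegenerateP adj_deg z_neq0) (iff_sym (ker_pow_stableP adj z)).
Qed.
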